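(* The one-dimensional subalgebras of ${\rm S}_2$ are exactly $\langle e_1\rangle$, $\langle e_2\rangle$ and $\langle e_1+\alpha e_2\pm e_3\rangle$ ($\alpha\in\mathbb{C}$). Up to automorphisms of ${\rm S}_2$, every one-dimensional subalgebra is equivalent to one of $\langle e_1\rangle$, $\langle e_2\rangle$, $\langle e_1+e_3\rangle$, $\langle e_1-e_3\rangle$.
   Context: ${\rm S}_2$ is the complex algebra with basis $e_1,e_2,e_3$, unit $e_1$ ($e_1e_i=e_ie_1=e_i$), $e_2e_3=e_2$, $e_3e_2=-e_2$, $e_3e_3=e_1$; all other products of basis elements are zero (involution $\overline{e_1}=e_1$, $\overline{e_2}=-e_2$, $\overline{e_3}=-e_3$, which plays no role here). A subalgebra is a linear subspace closed under multiplication (it need not contain $e_1$). Equivalence up to automorphisms means one is mapped onto the other by an algebra automorphism. $\langle S\rangle$ denotes linear span. *)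

From HB Require Import structures.
From mathcomp Require Import all_boot all_order all_algebra.
From mathcomp Require Import complex.
From mathcomp Require Import Rstruct.
Set Implicit Arguments. Unset Strict Implicit. Unset Printing Implicit Defensive.
Import Order.TTheory GRing.Theory Num.Theory.
Local Open Scope ring_scope.

Definition C : Type := complex Rdefinitions.R.
HB.instance Definition _ := GRing.Field.on C.

(* The underlying vector space of S_2: C^3, elements written in coordinates
   with respect to the basis e_1, e_2, e_3 (indices 0, 1, 2). *)
Notation S2 := 'rV[C]_3.

Definition e (i : 'I_3) : S2 := delta_mx 0 i.
Definition e1 : S2 := e 0.
Definition e2 : S2 := e 1.
Definition e3 : S2 := e 2%:R.

Definition s2tab (i j : 'I_3) : S2 :=
  match val i, val j with
  | 0%N, _ => e j
  | _, 0%N => e i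
  | 1%N, 2%N => e2
  | 2%N, 1%N => - e2
  | 2%N, 2%N => e1
  | _, _ => 0
  end.

Definition s2mul (x y : S2) : S2 :=
  \sum_(i < 3) \sum_(j < 3) (x 0 i * y 0 j) *: s2tab i j.

(* A subalgebra: a linear subspace closed under multiplication
   (not required to contain e1). *)
Definition is_subalgebra (U : {vspace S2}) : Prop :=
  forall x y, x \in U -> y \in U -> s2mul x y \in U.

Definition is_automorphism (f : 'End(S2)) : Prop :=
  lker f = 0%VS /\ limg f = fullv /\
  forall x y, f (s2mul x y) = s2mul (f x) (f y).

Definition aut_equiv (U V : {vspace S2}) : Prop :=
  exists f : 'End(S2), is_automorphism f /\ (f @: U)%VS = V.

(** Writing v = a e1 + b e2 + c e3, the square is v v = (a^2 + c^2) e1 + 2ab e2 + 2ac e3,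
    so <[v]> is a subalgebra iff v v = l v for some l.  If a = 0 this forces c = 0 and
    v is a multiple of e2; if a <> 0 and l <> 2a it forces b = c = 0; and if l = 2a it
    forces c^2 = a^2, i.e. v is a multiple of e1 + (b/a) e2 +- e3.  The parameter b/a
    is removed by the shear a e1 + b e2 + c e3 |-> a e1 + (b + beta c) e2 + c e3, which
    is conjugation by the unit e1 + (beta/2) e2 and fixes e1 and e2. *)
From mathcomp Require Import all_boot all_order all_algebra.
From mathcomp Require Import ring.
Set Implicit Arguments. Unset Strict Implicit. Unset Printing Implicit Defensive.
Import GRing.Theory.
Local Open Scope ring_scope.

Section Lines.

Variables (K : fieldType) (vT : vectType K).

Lemma dimv1_vline (U : {vspace vT}) :
  \dim U = 1%N -> exists2 v, v != 0 & U = <[v]>%VS.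
Proof.
move=> dimU; have pickU_neq0 : vpick U != 0 by rewrite vpick0 -dimv_eq0 dimU.
exists (vpick U) => //; apply/eqP; rewrite eq_sym eqEdim -memvE memv_pick.
by rewrite dimU dim_vline pickU_neq0.
Qed.

Lemma vlineZ (k : K) (v : vT) : k != 0 -> <[k *: v]>%VS = <[v]>%VS.
Proof.
move=> k_neq0; apply/eqP; rewrite eqEdim -memvE memvZ ?memv_line // !dim_vline.
by rewrite scaler_eq0 (negbTE k_neq0) leqnn.
Qed.

End Lines.

Definition i0 : 'I_3 := Ordinal (isT : 0 < 3)%N.
Definition i1 : 'I_3 := Ordinal (isT : 1 < 3)%N.
Definition i2 : 'I_3 := Ordinal (isT : 2 < 3)%N.

Lemma sum_ord3 (M : nmodType) (F : 'I_3 -> M) : \sum_(i < 3) F i = F i0 + F i1 + F i2.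
Proof.
rewrite !big_ord_recl big_ord0 addr0 addrA.
by congr (F _ + F _ + F _); apply: val_inj.
Qed.

Lemma row3P (x y : S2) :
  x 0 i0 = y 0 i0 -> x 0 i1 = y 0 i1 -> x 0 i2 = y 0 i2 -> x = y.
Proof.
move=> eq0 eq1 eq2; apply/rowP => -[[|[|[|//]]] k_lt3].
- by rewrite (_ : Ordinal k_lt3 = i0) //; apply: val_inj.
- by rewrite (_ : Ordinal k_lt3 = i1) //; apply: val_inj.
- by rewrite (_ : Ordinal k_lt3 = i2) //; apply: val_inj.
Qed.

Lemma s2mulE x y k :
  s2mul x y 0 k = \sum_(i < 3) \sum_(j < 3) x 0 i * y 0 j * s2tab i j 0 k.
Proof.
rewrite summxE; apply: eq_bigr => i _.
by rewrite summxE; apply: eq_bigr => j _; rewrite mxE.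
Qed.

Lemma s2mul0 x y : s2mul x y 0 i0 = x 0 i0 * y 0 i0 + x 0 i2 * y 0 i2.
Proof. rewrite s2mulE !sum_ord3 /s2tab /= /e1 /e2 /e !mxE /=; ring. Qed.

Lemma s2mul1 x y :
  s2mul x y 0 i1 = x 0 i0 * y 0 i1 + x 0 i1 * y 0 i0 + x 0 i1 * y 0 i2 - x 0 i2 * y 0 i1.
Proof. rewrite s2mulE !sum_ord3 /s2tab /= /e1 /e2 /e !mxE /=; ring. Qed.

Lemma s2mul2 x y : s2mul x y 0 i2 = x 0 i0 * y 0 i2 + x 0 i2 * y 0 i0.
Proof. rewrite s2mulE !sum_ord3 /s2tab /= /e1 /e2 /e !mxE /=; ring. Qed.

Ltac s2_coords :=
  apply: row3P; rewrite /e1 /e2 /e3 /e ?mxE ?(s2mul0, s2mul1, s2mul2) ?mxE /=.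

Lemma s2mulZ a b x y : s2mul (a *: x) (b *: y) = (a * b) *: s2mul x y.
Proof. by s2_coords; ring. Qed.

Lemma s2mul_sqr v :
  s2mul v v = \row_k [:: v 0 i0 ^+ 2 + v 0 i2 ^+ 2; 2 * v 0 i0 * v 0 i1;
                         2 * v 0 i0 * v 0 i2]`_k.
Proof. by s2_coords; ring. Qed.

Lemma is_subalgebra_vline v : is_subalgebra <[v]> <-> exists l, s2mul v v = l *: v.
Proof.
split=> [sub_v | [l sqr_v] x y /vlineP[a ->] /vlineP[b ->]].
  by apply/vlineP/sub_v; apply: memv_line.
by apply/vlineP; exists (a * b * l); rewrite s2mulZ sqr_v scalerA.
Qed.

Lemma vline_sqr_cases v l : v != 0 -> s2mul v v = l *: v ->
  [\/ <[v]>%VS = <[e1]>%VS, <[v]>%VS = <[e2]>%VS,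
      exists a : C, <[v]>%VS = <[e1 + a *: e2 + e3]>%VS
    | exists a : C, <[v]>%VS = <[e1 + a *: e2 - e3]>%VS].
Proof.
move=> v_neq0; rewrite s2mul_sqr => sqr_v.
have coord k := congr1 (fun w : S2 => w 0 k) sqr_v.
have eq0 := coord i0; have eq1 := coord i1; have eq2 := coord i2.
rewrite /= !mxE /= in eq0 eq1 eq2.
have [a0 | a_neq0] := eqVneq (v 0 i0) 0.
  have /eqP : v 0 i2 ^+ 2 = 0 by move: eq0; rewrite a0 mulr0 expr0n add0r.
  rewrite sqrf_eq0 => /eqP c0.
  have v_e2 : v = v 0 i1 *: e2 by s2_coords; rewrite ?a0 ?c0; ring.
  have b_neq0 : v 0 i1 != 0.
    by apply: contraNneq v_neq0 => b0; rewrite v_e2 b0 scale0r.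
  by apply: Or42; rewrite v_e2 vlineZ.
have [l2a | l_neq2a] := eqVneq l (2 * v 0 i0).
  have : v 0 i2 ^+ 2 == v 0 i0 ^+ 2.
    by apply/eqP/(addrI (v 0 i0 ^+ 2)); rewrite eq0 l2a; ring.
  rewrite eqf_sqr => /orP[/eqP ca | /eqP cNa].
    apply: Or43; exists (v 0 i1 / v 0 i0).
    have v_eq : v = v 0 i0 *: (e1 + (v 0 i1 / v 0 i0) *: e2 + e3).
      by s2_coords; rewrite ?ca; field.
    by rewrite [in LHS]v_eq vlineZ.
  apply: Or44; exists (v 0 i1 / v 0 i0).
  have v_eq : v = v 0 i0 *: (e1 + (v 0 i1 / v 0 i0) *: e2 - e3).
    by s2_coords; rewrite ?cNa; field.
  by rewrite [in LHS]v_eq vlineZ.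
have coord0 w : 2 * v 0 i0 * w = l * w -> w = 0.
  move=> eqw; have /eqP : (2 * v 0 i0 - l) * w = 0 by rewrite mulrBl eqw subrr.
  by rewrite mulf_eq0 subr_eq0 eq_sym (negbTE l_neq2a) => /eqP.
have v_e1 : v = v 0 i0 *: e1.
  by s2_coords; rewrite ?(coord0 _ eq1) ?(coord0 _ eq2); ring.
by apply: Or41; rewrite v_e1 vlineZ.
Qed.

Lemma vline_subalgebra v l : v != 0 -> s2mul v v = l *: v ->
  \dim <[v]> = 1%N /\ is_subalgebra <[v]>.
Proof.
move=> v_neq0 sqr_v; split; first by rewrite dim_vline v_neq0.
by apply/is_subalgebra_vline; exists l.
Qed.

Lemma dim1_subalgebra_cases U : \dim U = 1%N -> is_subalgebra U ->
  [\/ U = <[e1]>%VS, U = <[e2]>%VS,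
      exists a : C, U = <[e1 + a *: e2 + e3]>%VS
    | exists a : C, U = <[e1 + a *: e2 - e3]>%VS].
Proof.
by move=> /dimv1_vline[v v_neq0 ->] /is_subalgebra_vline[l]; apply: vline_sqr_cases.
Qed.

Lemma coord_neq0 (v : S2) i : v 0 i != 0 -> v != 0.
Proof. by apply: contraNneq => ->; rewrite mxE. Qed.

Definition shear (b : C) : 'End(S2) := linfun (mulmxr (1%:M + b *: delta_mx i2 i1)).

Lemma shearE b x : shear b x = x + (b * x 0 i2) *: e2.
Proof. apply: row3P; rewrite lfunE /= /e2 /e !mxE !sum_ord3 !mxE /=; ring. Qed.

Lemma shearK b : cancel (shear b) (shear (- b)).
Proof. by move=> x; rewrite !shearE; s2_coords; ring. Qed.

Lemma shear_automorphism b : is_automorphism (shear b).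
Proof.
have ker0 : lker (shear b) == 0%VS by apply/lker0P/(can_inj (shearK b)).
split; [exact/eqP | split; first exact: lker0_limgf].
by move=> x y; rewrite !shearE; s2_coords; ring.
Qed.

Lemma aut_equiv_shear b v w : shear b v = w -> aut_equiv <[v]>%VS <[w]>%VS.
Proof.
by move=> <-; exists (shear b); split; [exact: shear_automorphism | exact: limg_line].
Qed.

Theorem mainTheorem16 :
  (forall U : {vspace S2},
     (\dim U = 1%N /\ is_subalgebra U) <->
     [\/ U = <[e1]>%VS, U = <[e2]>%VS,
         (exists a : C, U = <[e1 + a *: e2 + e3]>%VS)
       | (exists a : C, U = <[e1 + a *: e2 - e3]>%VS)]) /\
  (forall U : {vspace S2},
     \dim U = 1%N -> is_subalgebra U ->
     [\/ aut_equiv U <[e1]>%VS, aut_equiv U <[e2]>%VS,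
         aut_equiv U <[e1 + e3]>%VS | aut_equiv U <[e1 - e3]>%VS]).
Proof.
split=> U.
  split=> [[]|]; first exact: dim1_subalgebra_cases.
  case=> [->|->|[a ->]|[a ->]].
  - apply: (vline_subalgebra (l := 1)); last by s2_coords; ring.
    by apply: (coord_neq0 (i := i0)); rewrite /e1 /e !mxE oner_eq0.
  - apply: (vline_subalgebra (l := 0)); last by s2_coords; ring.
    by apply: (coord_neq0 (i := i1)); rewrite /e2 /e !mxE oner_eq0.
  - apply: (vline_subalgebra (l := 2)); last by s2_coords; ring.
    by apply: (coord_neq0 (i := i0)); rewrite /e1 /e2 /e3 /e !mxE /= mulr0 !addr0 oner_eq0.
  - apply: (vline_subalgebra (l := 2)); last by s2_coords; ring.
    by apply: (coord_neq0 (i := i0)); rewrite /e1 /e2 /e3 /e !mxE /= mulr0 oppr0 !addr0 oner_eq0.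
move=> dimU subU; case: (dim1_subalgebra_cases dimU subU) => [->|->|[a ->]|[a ->]].
- by apply: Or41; apply: (aut_equiv_shear (b := 0)); rewrite shearE; s2_coords; ring.
- by apply: Or42; apply: (aut_equiv_shear (b := 0)); rewrite shearE; s2_coords; ring.
- by apply: Or43; apply: (aut_equiv_shear (b := - a)); rewrite shearE; s2_coords; ring.
- by apply: Or44; apply: (aut_equiv_shear (b := a)); rewrite shearE; s2_coords; ring.
Qed.
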